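(* Let $p>3$ be a prime, $q=p^h$, and $a,b\in\mathbb{F}_{q^2}^*$. Suppose $f_{a,b}(X)=X(1+aX^{q(q-1)}+bX^{2(q-1)})$ is a permutation polynomial of $\mathbb{F}_{q^2}$ and $\deg\gcd(N_{a,b},D_{a,b})=2$. Then $b=v/a^2$ for some $v\in\mathbb{F}_q^*$ with $v^2-a^{q+1}v-a^{3q+3}=0$ and $-3a^{2q+2}-4v\in\square_q^*$.
   Context: A polynomial $f\in\mathbb{F}_{q^2}[X]$ is a permutation polynomial of $\mathbb{F}_{q^2}$ if $x\mapsto f(x)$ is a bijection of $\mathbb{F}_{q^2}$. $N_{a,b}(X)=a^qX^3+X^2+b^q$ and $D_{a,b}(X)=bX^3+X+a$. $\square_q^*$ denotes the set of nonzero squares of $\mathbb{F}_q$. *)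

From HB Require Import structures.
From mathcomp Require Import all_boot all_order all_algebra all_field.
Set Implicit Arguments. Unset Strict Implicit. Unset Printing Implicit Defensive.
Import GRing.Theory.
Local Open Scope ring_scope.

(* F plays the role of F_{q^2}; F_q is realised as the subfield {x | x^q = x}. *)
Definition in_Fq (F : finFieldType) (q : nat) (x : F) : bool := x ^+ q == x.

Definition nz_square_Fq (F : finFieldType) (q : nat) (x : F) : Prop :=
  in_Fq q x /\ x != 0 /\ exists w : F, in_Fq q w /\ w ^+ 2 = x.

Definition is_perm_poly (F : finFieldType) (f : {poly F}) : Prop :=
  bijective (fun x : F => f.[x]).

Definition f_ab (F : finFieldType) (q : nat) (a b : F) : {poly F} :=
  'X * (1 + a *: 'X^(q * (q - 1)) + b *: 'X^(2 * (q - 1))).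

Definition N_ab (F : finFieldType) (q : nat) (a b : F) : {poly F} :=
  (a ^+ q) *: 'X^3 + 'X^2 + (b ^+ q)%:P.

Definition D_ab (F : finFieldType) (a b : F) : {poly F} :=
  b *: 'X^3 + 'X + a%:P.

From mathcomp Require Import all_boot all_order all_algebra all_field.
From mathcomp Require Import cyclic ring.
Set Implicit Arguments. Unset Strict Implicit. Unset Printing Implicit Defensive.
Import GRing.Theory.
Local Open Scope ring_scope.

(* Q := b N_{a,b} - a^q D_{a,b} has degree 2, so the gcd hypothesis forces
   Q | D_{a,b}; the linear cofactor yields relations between a, b, a^q, b^q
   showing that v := a^2 b lies in F_q and is a root of
   X^2 - a^{q+1} X - a^{3q+3}.  A permutation f_{a,b} forbids roots x of D_{a,b}
   with x^{q+1} = 1: writing x = y^{q-1} gives f_{a,b}(y) = 0 = f_{a,b}(0).  But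
   if -3a^{2q+2} - 4v were not a nonzero square of F_q, its square root s in
   F_{q^2} would satisfy s^q = -s; then the two roots of Q are exchanged by
   Frobenius, so Q, hence D_{a,b}, has a root of norm one. *)

Lemma expf_card_pred (F : finFieldType) (x : F) : x != 0 -> x ^+ #|F|.-1 = 1.
Proof.
move=> x_neq0; apply: (mulIf x_neq0).
by rewrite mul1r -exprSr prednK ?expf_card // (ltn_trans _ (finNzRing_gt1 F)).
Qed.

Lemma finField_prim_root (F : finFieldType) :
  exists g : F, (#|F|.-1).-primitive_root g.
Proof.
have n_gt0 : (0 < #|F|.-1)%N by rewrite -ltnS prednK ?finNzRing_gt1 // ltnW ?finNzRing_gt1.
have : has (#|F|.-1).-primitive_root (enum (predC1 (0 : F))).
  apply: has_prim_root; rewrite ?enum_uniq // -?cardE ?cardC1 //.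
  by apply/allP => z; rewrite mem_enum => z_neq0; rewrite unity_rootE expf_card_pred.
by case/hasP => g _; exists g.
Qed.

(* F^* is cyclic of order m k, so its m-torsion consists of k-th powers. *)
Lemma finField_unity_root_expr (F : finFieldType) (m k : nat) (x : F) :
  #|F|.-1 = (m * k)%N -> x ^+ m = 1 -> exists2 y : F, y != 0 & y ^+ k = x.
Proof.
move=> card_mk xm1; have [g prim_g] := finField_prim_root F.
have n_gt0 := prim_order_gt0 prim_g.
have m_gt0 : (0 < m)%N by move: n_gt0; rewrite card_mk; case: (m).
have xn1 : x ^+ #|F|.-1 = 1 by rewrite card_mk exprM xm1 expr1n.
have [[i _] /= x_gi] := prim_rootP prim_g xn1.
have : (#|F|.-1 %| i * m)%N by rewrite (prim_order_dvd prim_g) exprM -x_gi xm1.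
rewrite card_mk [(i * m)%N]mulnC dvdn_pmul2l // => k_dvd_i.
exists (g ^+ (i %/ k)); last by rewrite -exprM divnK.
apply: expf_neq0; apply: contra_eq_neq (prim_expr_order prim_g) => ->.
by rewrite expr0n gtn_eqF // eq_sym oner_eq0.
Qed.

Lemma expr_norm_mul (R : pzSemiRingType) (x : R) (n k : nat) :
  x ^+ (k * n + k) = x ^+ (n + 1) ^+ k.
Proof. by rewrite -exprM mulnDl mul1n mulnC. Qed.

Lemma dvdp_gcdp_size (F : fieldType) (P Q R : {poly F}) :
  gcdp P Q %| R -> size R = size (gcdp P Q) -> R %| Q.
Proof.
move=> gcd_dvdR sizeR.
have : gcdp P Q %= R by rewrite -dvdp_size_eqp // sizeR.
by move/eqp_dvdl <-; rewrite dvdp_gcdr.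
Qed.

Lemma dvdp_size_lt_eq0 (F : fieldType) (P R : {poly F}) :
  P %| R -> (size R < size P)%N -> R = 0.
Proof.
move=> P_dvdR; apply: contraTeq => R_neq0.
by rewrite -leqNgt dvdp_leq.
Qed.

(* b N_{a,b} - a^q D_{a,b}, the degree-2 polynomial in the ideal (N_{a,b}, D_{a,b}). *)
Definition Q_ab (F : finFieldType) (q : nat) (a b : F) : {poly F} :=
  b *: 'X^2 - a ^+ q *: 'X + (b * b ^+ q - a ^+ q * a)%:P.

Section QuadraticFactor.
Variables (F : finFieldType) (q : nat) (a b : F).
Hypothesis b_neq0 : b != 0.

Lemma Q_abE : Q_ab q a b = b *: N_ab q a b - a ^+ q *: D_ab a b.
Proof. by rewrite /Q_ab /N_ab /D_ab -!mul_polyC !(polyCM, polyCB); ring. Qed.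

Lemma size_Q_ab : size (Q_ab q a b) = 3%N.
Proof.
rewrite /Q_ab -addrA size_polyDl ?size_scale ?size_polyXn //.
apply: (leq_ltn_trans (size_polyD _ _)); rewrite gtn_max size_polyN.
by rewrite (leq_ltn_trans (size_scale_leq _ _)) ?size_polyX ?(leq_ltn_trans (size_polyC_leq1 _)).
Qed.

Lemma Q_ab_dvd_D_ab :
  (size (gcdp (N_ab q a b) (D_ab a b))).-1 = 2%N -> Q_ab q a b %| D_ab a b.
Proof.
move=> deg_gcd; apply: (dvdp_gcdp_size (P := N_ab q a b)).
  by rewrite Q_abE dvdp_sub // -mul_polyC dvdp_mull ?(dvdp_gcdl, dvdp_gcdr).
by rewrite size_Q_ab; move: deg_gcd; case: size => // n /= ->.
Qed.

(* The remainder of b D_{a,b} modulo Q_{a,b} is linear; it vanishes since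
   Q_{a,b} divides D_{a,b}. *)
Lemma Q_ab_dvd_D_ab_relations : Q_ab q a b %| D_ab a b ->
  let c := b * b ^+ q - a ^+ q * a in
  a ^+ q * c = a * b /\ a * b ^+ 2 = a ^+ q * b + a ^+ q ^+ 3.
Proof.
move=> Q_dvdD c; set A := a ^+ q.
have remE : b *: D_ab a b - (b *: 'X + A%:P) * Q_ab q a b =
    (b - b * c + A ^+ 2) *: 'X + (a * b - A * c)%:P.
  by rewrite /D_ab /Q_ab -!mul_polyC !(polyCM, polyCB, polyCD, polyC_exp); ring.
have /dvdp_size_lt_eq0 rem0 : Q_ab q a b %| (b - b * c + A ^+ 2) *: 'X + (a * b - A * c)%:P.
  by rewrite -remE dvdp_sub ?dvdp_mull // -mul_polyC dvdp_mull.
have {}rem0 : (b - b * c + A ^+ 2) *: 'X + (a * b - A * c)%:P = 0.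
  apply: rem0; rewrite size_Q_ab ltnS (leq_trans (size_polyD _ _)) // geq_max.
  by rewrite (leq_trans (size_scale_leq _ _)) ?size_polyX ?(leq_trans (size_polyC_leq1 _)).
have coef1 := congr1 (fun P : {poly F} => P`_1) rem0.
have coef0 := congr1 (fun P : {poly F} => P`_0) rem0.
move: coef1 coef0; rewrite /= !coefE /= !(mulr0, mulr1, addr0, add0r) => rel1 rel0.
split.
  by apply/eqP; rewrite eq_sym -subr_eq0 rel0.
apply/eqP; rewrite -subr_eq0.
have -> : a * b ^+ 2 - (A * b + A ^+ 3) =
    b * (a * b - A * c) - A * (b - b * c + A ^+ 2) by ring.
by rewrite rel0 rel1 !mulr0 subrr.
Qed.

Lemma a2b_quadratic : Q_ab q a b %| D_ab a b ->
  (a ^+ 2 * b) ^+ 2 - a ^+ (q + 1) * (a ^+ 2 * b) - a ^+ (3 * q + 3) = 0.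
Proof.
move=> /Q_ab_dvd_D_ab_relations [_ E3].
rewrite exprD expr1 exprD [(3 * q)%N]mulnC exprM.
have -> : (a ^+ 2 * b) ^+ 2 - a ^+ q * a * (a ^+ 2 * b) - a ^+ q ^+ 3 * a ^+ 3 =
    a ^+ 3 * (a * b ^+ 2 - (a ^+ q * b + a ^+ q ^+ 3)) by ring.
by rewrite E3 subrr mulr0.
Qed.

End QuadraticFactor.

Section Frobenius.
Variables (F : finFieldType) (p h : nat).
Hypotheses (p_prime : prime p) (p_gt2 : (2 < p)%N) (card_F : #|F| = ((p ^ h) ^ 2)%N).
Local Notation q := (p ^ h)%N.

Lemma pchar_F : p \in [pchar F].
Proof. by apply: (card_finPcharP (n := (h * 2)%N)); rewrite // card_F expnM. Qed.

Lemma pchar_nat_q : [pchar F].-nat q.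
Proof. by rewrite (eq_pnat _ (pcharf_eq pchar_F)) pnatX pnat_id. Qed.

Lemma frobD (x y : F) : (x + y) ^+ q = x ^+ q + y ^+ q.
Proof. exact: exprDn_pchar pchar_nat_q. Qed.

Lemma frobN (x : F) : (- x) ^+ q = - x ^+ q.
Proof. exact: exprNn_pchar pchar_nat_q. Qed.

Lemma frob_nat (n : nat) : (n%:R : F) ^+ q = n%:R.
Proof.
elim: n => [|n IHn]; first by rewrite expr0n expn_eq0 (gtn_eqF (prime_gt0 p_prime)).
by rewrite -addn1 natrD frobD IHn expr1n.
Qed.

Lemma frobK (x : F) : x ^+ q ^+ q = x.
Proof. by rewrite -exprM mulnn -card_F expf_card. Qed.

Lemma q_gt1 : (1 < q)%N.
Proof. by rewrite -(ltn_exp2r _ _ (isT : (0 < 2)%N)) -card_F finNzRing_gt1. Qed.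

Lemma odd_q : odd q.
Proof. by rewrite oddX orbC; case: (even_prime p_prime) p_gt2 => [-> | ->]. Qed.

Lemma card_F_pred : #|F|.-1 = ((q - 1) * (q + 1))%N.
Proof. by rewrite card_F -subn_sqr exp1n subn1. Qed.

Lemma two_neq0 : (2%:R : F) != 0.
Proof.
apply: contraTneq p_gt2 => two0.
have : 2%N \in [pchar F] by rewrite inE /= two0 eqxx.
by rewrite (pcharf_eq pchar_F) inE => /eqP <-.
Qed.

Lemma norm_Fq (x : F) : (x ^+ (q + 1)) ^+ q = x ^+ (q + 1).
Proof. by rewrite addn1 exprSr exprMn frobK mulrC. Qed.

Lemma Fq_sqrt (x : F) : x ^+ q = x -> exists s : F, s ^+ 2 = x.
Proof.
move=> xFq; have [-> | x_neq0] := eqVneq x 0; first by exists 0; rewrite expr0n.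
have x_unity : x ^+ (q - 1) = 1.
  by apply: (mulIf x_neq0); rewrite mul1r -exprSr subn1 prednK ?xFq // ltnW ?q_gt1.
have [y _ yx] := finField_unity_root_expr card_F_pred x_unity.
by exists (y ^+ ((q + 1) %/ 2)); rewrite -exprM divnK // dvdn2 addn1 /= odd_q.
Qed.

Lemma nz_square_FqP (x : F) : x ^+ q = x ->
  (forall s : F, s ^+ 2 = x -> s ^+ q != - s) -> nz_square_Fq q x.
Proof.
move=> xFq no_anti; have [s sx] := Fq_sqrt xFq.
have : (s ^+ q) ^+ 2 == s ^+ 2 by rewrite exprAC sx xFq.
rewrite eqf_sqr (negPf (no_anti s sx)) orbF => sFq.
have s_neq0 : s != 0.
  by apply: contraNneq (no_anti s sx) => ->; rewrite oppr0 expr0n gtn_eqF // ltnW ?q_gt1.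
by split; [apply/eqP | split; [rewrite -sx expf_neq0 | exists s]].
Qed.

Lemma quadratic_root_norm (t u s : F) :
  t ^+ q = t -> u ^+ q = u -> s ^+ 2 = t ^+ 2 - 4%:R * u -> s ^+ q = - s ->
  exists Y : F, Y ^+ 2 - t * Y + u = 0 /\ Y ^+ q * Y = u.
Proof.
move=> tFq uFq s2 s_anti; have two0 := two_neq0.
have four0 : (4%:R : F) != 0 by rewrite -[4%N]/(2 * 2)%N natrM mulf_neq0.
exists ((t + s) / 2%:R); split.
  have -> : ((t + s) / 2%:R) ^+ 2 - t * ((t + s) / 2%:R) + u =
      (s ^+ 2 - (t ^+ 2 - 4%:R * u)) / 4%:R by field; rewrite four0 two0.
  by rewrite s2 subrr mul0r.
rewrite exprMn exprVn frobD s_anti tFq frob_nat.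
have -> : (t - s) / 2%:R * ((t + s) / 2%:R) = (t ^+ 2 - s ^+ 2) / 4%:R.
  by field; rewrite four0 two0.
by rewrite s2; field; rewrite four0.
Qed.

(* If y^(q-1) = x with x^(q+1) = 1, then f_{a,b}(y) = y x^q D_{a,b}(x); so a
   root of D_{a,b} on the norm-one circle yields a second zero of f_{a,b}. *)
Lemma D_ab_no_root_norm1 (a b x : F) : is_perm_poly (f_ab q a b) ->
  x ^+ q * x = 1 -> ~~ root (D_ab a b) x.
Proof.
move=> /bij_inj f_inj norm1; apply/negP => /eqP Dx0.
have [y y_neq0 yx] : exists2 y : F, y != 0 & y ^+ (q - 1) = x.
  apply: (finField_unity_root_expr (m := (q + 1)%N)); last by rewrite exprD expr1.
  by rewrite card_F_pred mulnC.
apply: (negP y_neq0); apply/eqP; apply: f_inj => /=.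
rewrite /f_ab !hornerE [(q * _)%N]mulnC [(2 * _)%N]mulnC !exprM yx.
have -> : 1 + a * x ^+ q + b * x ^+ 2 =
    x ^+ q * (D_ab a b).[x] + (1 - x ^+ q * x) * (1 + b * x ^+ 2).
  by rewrite /D_ab !(hornerD, hornerZ, hornerXn, hornerX, hornerC); ring.
by rewrite Dx0 norm1 subrr !(mulr0, mul0r, addr0).
Qed.

Section Relations.
Variables a b : F.
Hypotheses (a_neq0 : a != 0) (b_neq0 : b != 0) (Q_dvd_D : Q_ab q a b %| D_ab a b).

Lemma a2b_Fq : (a ^+ 2 * b) ^+ q = a ^+ 2 * b.
Proof.
have [Ac_ab _] := Q_ab_dvd_D_ab_relations b_neq0 Q_dvd_D.
set c := _ - _ in Ac_ab.
have cFq : c ^+ q = c by rewrite /c frobD frobN !exprMn !frobK mulrC [a * _]mulrC.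
have ac : a * c = a ^+ q * b ^+ q.
  by have := congr1 (fun z => z ^+ q) Ac_ab; rewrite /= !exprMn frobK cFq.
apply/eqP; rewrite exprMn exprAC -subr_eq0.
have -> : a ^+ q ^+ 2 * b ^+ q - a ^+ 2 * b =
    a ^+ q * (a ^+ q * b ^+ q - a * c) + a * (a ^+ q * c - a * b) by ring.
by rewrite ac Ac_ab !subrr !mulr0 addr0.
Qed.

Lemma a2b_disc_Fq :
  (- 3%:R * a ^+ (2 * q + 2) - 4%:R * (a ^+ 2 * b)) ^+ q =
  - 3%:R * a ^+ (2 * q + 2) - 4%:R * (a ^+ 2 * b).
Proof.
have uFq := norm_Fq a; have vFq := a2b_Fq.
rewrite expr_norm_mul; set u := a ^+ (q + 1) in uFq *; set v := a ^+ 2 * b in vFq *.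
by rewrite frobD frobN [(_ * u ^+ 2) ^+ q]exprMn [(_ * v) ^+ q]exprMn frobN !frob_nat exprAC uFq vFq.
Qed.

(* With u := a^{q+1}, v := a^2 b and t := u^2/v, (u/v) s is a square root of
   the discriminant of Y^2 - t Y + u, whose root Y gives the root Y/a^q of Q_{a,b}. *)
Lemma a2b_disc_no_anti_sqrt (s : F) : is_perm_poly (f_ab q a b) ->
  s ^+ 2 = - 3%:R * a ^+ (2 * q + 2) - 4%:R * (a ^+ 2 * b) -> s ^+ q != - s.
Proof.
move=> perm s2; apply/negP => /eqP s_anti.
have [Ac_ab _] := Q_ab_dvd_D_ab_relations b_neq0 Q_dvd_D.
have vquad := a2b_quadratic b_neq0 Q_dvd_D.
have uFq := norm_Fq a; have vFq := a2b_Fq.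
set u := a ^+ (q + 1) in vquad uFq; set v := a ^+ 2 * b in vquad vFq s2.
have A_neq0 : a ^+ q != 0 by rewrite expf_neq0.
have v_neq0 : v != 0 by rewrite mulf_neq0 ?expf_neq0.
have uE : u = a ^+ q * a by rewrite /u exprD expr1.
rewrite expr_norm_mul -/u in s2; rewrite expr_norm_mul -/u in vquad.
pose t := u ^+ 2 / v.
have tFq : t ^+ q = t by rewrite exprMn exprVn exprAC uFq vFq.
have s'2 : (u / v * s) ^+ 2 = t ^+ 2 - 4%:R * u.
  apply/eqP; rewrite exprMn s2 -subr_eq0.
  have -> : (u / v) ^+ 2 * (- 3%:R * u ^+ 2 - 4%:R * v) - (t ^+ 2 - 4%:R * u) =
      4%:R * u / v ^+ 2 * (v ^+ 2 - u * v - u ^+ 3).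
    by rewrite /t; field; rewrite v_neq0.
  by rewrite vquad mulr0.
have s'_anti : (u / v * s) ^+ q = - (u / v * s).
  by rewrite !exprMn exprVn uFq vFq s_anti mulrN.
have [Y [Y_root Y_norm]] := quadratic_root_norm tFq uFq s'2 s'_anti.
pose x := Y / a ^+ q.
have x_norm1 : x ^+ q * x = 1.
  have -> : x ^+ q * x = (Y ^+ q * Y) / u.
    by rewrite /x exprMn exprVn frobK uE; field; rewrite a_neq0 A_neq0.
  by rewrite Y_norm divff // uE mulf_neq0.
apply: (negP (D_ab_no_root_norm1 perm x_norm1)); apply: root_dvdp Q_dvd_D _.
have cE : b * b ^+ q - a ^+ q * a = a * b / a ^+ q.
  by rewrite -Ac_ab mulrAC divff // mul1r.
rewrite /root /Q_ab !(hornerD, hornerN, hornerZ, hornerXn, hornerX, hornerC) cE.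
have -> : b * x ^+ 2 - a ^+ q * x + a * b / a ^+ q =
    b / a ^+ q ^+ 2 * (Y ^+ 2 - t * Y + u).
  by rewrite /x /t /v uE; field; rewrite a_neq0 A_neq0 b_neq0.
by rewrite Y_root mulr0.
Qed.

End Relations.
End Frobenius.

Theorem mainTheorem5 (F : finFieldType) (p h q : nat) (a b : F) :
  prime p -> (3 < p)%N -> (0 < h)%N -> q = (p ^ h)%N -> #|F| = (q ^ 2)%N ->
  a != 0 -> b != 0 ->
  is_perm_poly (f_ab q a b) ->
  (size (gcdp (N_ab q a b) (D_ab a b))).-1 = 2%N ->
  exists v : F,
    [/\ in_Fq q v, v != 0, b = v / a ^+ 2,
        v ^+ 2 - a ^+ (q + 1) * v - a ^+ (3 * q + 3) = 0 &
        nz_square_Fq q (- 3%:R * a ^+ (2 * q + 2) - 4%:R * v)].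
Proof.
move=> p_prime p_gt3 _ -> card_F a_neq0 b_neq0 perm deg_gcd.
have p_gt2 : (2 < p)%N := ltnW p_gt3.
have Q_dvd_D := Q_ab_dvd_D_ab b_neq0 deg_gcd.
exists (a ^+ 2 * b); split.
- exact/eqP/(a2b_Fq p_prime card_F b_neq0 Q_dvd_D).
- by rewrite mulf_neq0 ?expf_neq0.
- by rewrite mulrAC divff ?mul1r ?expf_neq0.
- exact: a2b_quadratic b_neq0 Q_dvd_D.
apply: (nz_square_FqP p_prime p_gt2 card_F).
  exact: (a2b_disc_Fq p_prime card_F b_neq0 Q_dvd_D).
by move=> s; apply: a2b_disc_no_anti_sqrt perm.
Qed.
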